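(* Assume each $K_n/k$ is a Galois extension and let $G=\mathrm{Gal}(K/k)$, acting on $K\subset\overline{K}$. Then for each $g\in G$ the map $g:K\to K\subset \overline{K}$ extends uniquely to a map $\overline{K}\to\overline{K}$ that is continuous with respect to the $*$-weak topology $\sigma(\overline{K},K)$ (the weakest topology making all functionals $y\mapsto\langle\xi,y\rangle$, $\xi\in K$, continuous), and these extensions define an action of $G$ on $\overline{K}$ by $*$-weakly continuous maps.
   Context: Let $k$ be a non-Archimedean local field of characteristic $0$, and let $k=K_1\subset K_2\subset\cdots$ be an increasing sequence of finite extensions, $K=\bigcup_n K_n$. Let $m_n=[K_n:k]$, $|\cdot|_n$ the normalized absolute value of $K_n$, $\|x\|=|x|_n^{1/m_n}$ for $x\in K_n$. For $n\le\nu$ and $x\in K_\nu$ put $T_n(x)=\frac{m_n}{m_\nu}\mathrm{Tr}_{K_\nu/K_n}(x)$ (independent of $\nu$); $T=T_1$. $\overline{K}$ is the set of sequences $y=(y_1,y_2,\dots)$, $y_n\in K_n$, with $y_n=T_n(y_\nu)$ for $\nu>n$, topologized by the seminorms $\|y\|_n=\|y_n\|$; $T_n(y):=y_n$, and $K$ is embedded in $\overline K$ via $x\mapsto(T_1(x),T_2(x),\dots)$. The pairing is $\langle\xi,y\rangle=T(\xi\,T_n(y))$ for $\xi\in K_n$, $y\in\overline{K}$. *)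

From HB Require Import structures.
From mathcomp Require Import all_boot all_order all_algebra all_field.
From mathcomp Require Import reals.
Set Implicit Arguments. Unset Strict Implicit. Unset Printing Implicit Defensive.
Import Order.TTheory GRing.Theory Num.Theory.
Local Open Scope ring_scope.

Definition nonarch_local_field_char0 (R : realType) (k : fieldType)
    (v : k -> R) : Prop :=
  [/\ (forall x, 0 <= v x /\ (v x = 0 <-> x = 0)),
      (forall x y, v (x * y) = v x * v y),
      (forall x y, v (x + y) <= Num.max (v x) (v y)),
      (exists pi : k, 0 < v pi < 1 /\
          forall x, x != 0 -> exists z : int, v x = v pi ^ z)
    & [/\ (forall u : nat -> k,
          (forall e, 0 < e -> exists N, forall m n, (N <= m)%N -> (N <= n)%N ->
                v (u m - u n) < e) ->
          exists l, forall e, 0 < e -> exists N, forall n, (N <= n)%N ->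
                v (u n - l) < e),
      (exists s : seq k, forall x, v x <= 1 -> exists2 r, r \in s & v (x - r) < 1)
    & [pchar k] =i pred0]].

Definition castL (T : nat -> Type) m m' (e : m = m') (x : T m) : T m' :=
  ecast i (T i) e x.

Section Tower.
Variables (k : fieldType) (L : nat -> fieldExtType k).
Variable f : forall n, 'AHom(L n, L n.+1).

Definition mdeg n : nat := \dim {:L n}.

Fixpoint emb (n d : nat) : 'Hom(L n, L (d + n)) :=
  match d return 'Hom(L n, L (d + n)) with
  | 0 => \1%VF
  | d'.+1 => (ahval (f (d' + n)) \o emb n d')%VF
  end.

End Tower.

Section TowerGalois.
Variables (k : fieldType) (L : nat -> splittingFieldType k).
Variable f : forall n, 'AHom(L n, L n.+1).

(* T_n(x) = (m_n / m_{d+n}) Tr_{K_{d+n}/K_n}(x)  for x in K_{d+n};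
   the relative trace over the image of K_n (the extensions are Galois)
   is galTrace, pulled back to K_n along the inclusion. *)
Definition Tr (n d : nat) (x : L (d + n)) : L n :=
  ((mdeg L n)%:R / (mdeg L (d + n))%:R : k) *:
    ((emb f n d)^-1)%VF (galTrace (limg (emb f n d)) fullv x).

Definition up (n nu : nat) (x : L n) : L nu :=
  match @idP (n <= nu)%N with
  | ReflectT h => @castL L _ _ (subnK h) (emb f n (nu - n) x)
  | ReflectF _ => 0
  end.

Arguments up n nu x : clear implicits.

Definition down (n nu : nat) (x : L nu) : L n :=
  match @idP (n <= nu)%N with
  | ReflectT h => @Tr n (nu - n) (@castL L _ _ (esym (subnK h)) x)
  | ReflectF _ => 0
  end.

Arguments down n nu x : clear implicits.

Definition Kbar_pred (y : forall n, L n) : Prop :=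
  forall n nu, (n <= nu)%N -> y n = down n nu (y nu).
Definition Kbar := {y : forall n, L n | Kbar_pred y}.

(* elements of K = union of the K_n, represented as pairs (n, x in K_n) *)
Definition Kel := {n : nat & L n}.

Definition Kequiv (a b : Kel) : Prop :=
  up (tag a) (maxn (tag a) (tag b)) (tagged a) = up (tag b) (maxn (tag a) (tag b)) (tagged b).
Definition Kadd (a b : Kel) : Kel :=
  existT L (maxn (tag a) (tag b))
    (up (tag a) (maxn (tag a) (tag b)) (tagged a) + up (tag b) (maxn (tag a) (tag b)) (tagged b)).
Definition Kmul (a b : Kel) : Kel :=
  existT L (maxn (tag a) (tag b))
    (up (tag a) (maxn (tag a) (tag b)) (tagged a) * up (tag b) (maxn (tag a) (tag b)) (tagged b)).
Definition Kscal (c : k) : Kel := existT L 0%N (c%:A).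

Definition is_Gal (g : Kel -> Kel) : Prop :=
  [/\ (forall a b, Kequiv a b -> Kequiv (g a) (g b)),
      (forall a b, Kequiv (g (Kadd a b)) (Kadd (g a) (g b))),
      (forall a b, Kequiv (g (Kmul a b)) (Kmul (g a) (g b))),
      (forall c, Kequiv (g (Kscal c)) (Kscal c))
    & ((forall a b, Kequiv (g a) (g b) -> Kequiv a b) /\
       (forall b, exists a, Kequiv (g a) b))].

(* the embedding K -> Kbar, x |-> (T_1(x), T_2(x), ...) ; T_m(x) for x in
   K_n is computed in K_{max(n,m)} *)
Definition iota (a : Kel) : forall m, L m :=
  fun m => down m (maxn (tag a) m) (up (tag a) (maxn (tag a) m) (tagged a)).

(* the scalar c of an element c%:A of K_1 = L 0 = k *)
Definition scal0 (z : L 0) : k := coord [tuple (1 : L 0)] (@ord0 0) z.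

Definition pairing (xi : Kel) (y : Kbar) : k :=
  scal0 (down 0 (tag xi) (tagged xi * sval y (tag xi))).

Section WeakTopology.
Variables (R : realType) (v : k -> R).

Definition kopen (V : k -> Prop) : Prop :=
  forall x, V x -> exists e : R, 0 < e /\ forall z, v (z - x) < e -> V z.

(* open sets of sigma(Kbar, K): the topology generated by the subbasis
   { y | <xi,y> in V }, xi in K, V open in k (weakest topology making all
   y |-> <xi, y> continuous) *)
Definition wopen (U : Kbar -> Prop) : Prop :=
  forall y, U y -> exists (m : nat) (xi : 'I_m -> Kel) (V : 'I_m -> k -> Prop),
    [/\ forall i, kopen (V i), forall i, V i (pairing (xi i) y)
      & forall z, (forall i, V i (pairing (xi i) z)) -> U z].

Definition wcont (Phi : Kbar -> Kbar) : Prop :=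
  forall U, wopen U -> wopen (fun y => U (Phi y)).

End WeakTopology.

Definition extends (g : Kel -> Kel) (Phi : Kbar -> Kbar) : Prop :=
  forall (a : Kel) (y : Kbar), sval y = iota a -> sval (Phi y) = iota (g a).

End TowerGalois.

From Pilot Require Import Defs.
From HB Require Import structures.
From mathcomp Require Import all_boot all_order all_algebra all_fingroup all_field.
From mathcomp Require Import boolp reals ring.
Set Implicit Arguments. Unset Strict Implicit. Unset Printing Implicit Defensive.
Import Order.TTheory GRing.Theory Num.Theory.
Local Open Scope ring_scope.

(* An element g of Gal(K/k) maps each K_n into itself, because it permutes the
   roots of minimal polynomials over k and these split in the Galois extension
   K_n; this gives automorphisms g_n of the K_n compatible with the inclusions.
   The normalised trace T_n is the mean of the roots of a minimal polynomial, so
   it commutes with every field isomorphism; hence (y_n) |-> (g_n y_n) maps Kbar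
   to itself and extends g, and it is *-weakly continuous because
   <xi, g y> = <g^-1 xi, y>.  For uniqueness, the truncations of y (the images in
   Kbar of the y_N in K_N) converge *-weakly to y, so two continuous extensions
   of g have values that no pairing <xi, .> separates; but the pairing separates
   points of Kbar, and distinct values of <xi, .> have disjoint ultrametric
   neighbourhoods.  The action property then follows from uniqueness. *)

Section Cast.
Variable T : nat -> Type.

Lemma castL_id m (e : m = m) (x : T m) : castL e x = x.
Proof. by rewrite (eq_irrelevance e erefl). Qed.

Lemma castL_irr m m' (e e' : m = m') (x : T m) : castL e x = castL e' x.
Proof. by rewrite (eq_irrelevance e e'). Qed.

End Cast.

Section Inclusions.
Variables (k : fieldType) (L : nat -> splittingFieldType k).
Variable f : forall n, 'AHom(L n, L n.+1).

Local Notation castL := (@castL L _ _).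
Local Notation up n nu x := (@Defs.up k L f n nu x).

Fixpoint emb_ahom (n d : nat) : 'AHom(L n, L (d + n)) :=
  match d return 'AHom(L n, L (d + n)) with
  | 0 => AHom (id_is_ahom (aspacef (L n)))
  | d'.+1 => comp_ahom (f (d' + n)) (emb_ahom n d')
  end.

Lemma emb_ahomE n d : emb f n d = emb_ahom n d.
Proof.
apply/lfunP; elim: d => [|d IH] x /=; first by rewrite !id_lfunE.
by rewrite !comp_lfunE IH.
Qed.

Lemma castL_f a b (e : a = b) (e' : a.+1 = b.+1) (w : L a) :
  castL e' (f a w) = f b (castL e w).
Proof. by case: b / e in e' *; rewrite !castL_id. Qed.

Lemma castL_emb n nu d1 d2 (e1 : (d1 + n = nu)%N) (e2 : (d2 + n = nu)%N) x :
  castL e1 (emb_ahom n d1 x) = castL e2 (emb_ahom n d2 x).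
Proof.
have E : d1 = d2 by apply/(@addIn n); rewrite e1 e2.
by subst d2; apply: castL_irr.
Qed.

Lemma up_cast n nu d (e : (d + n = nu)%N) x : up n nu x = castL e (emb_ahom n d x).
Proof.
rewrite /Defs.up; destruct (@idP (n <= nu)%N) as [h|h].
  by rewrite emb_ahomE; apply: castL_emb.
by exfalso; apply: h; rewrite -e leq_addl.
Qed.

Lemma up_refl n x : up n n x = x.
Proof. by rewrite (@up_cast n n 0 erefl) castL_id /= id_lfunE. Qed.

Lemma up_S n nu x : (n <= nu)%N -> up n nu.+1 x = f nu (up n nu x).
Proof.
move=> h; have e : ((nu - n).+1 + n = nu.+1)%N by rewrite addSn subnK.
by rewrite (up_cast e) /= comp_lfunE (castL_f (subnK h)) (up_cast (subnK h)).
Qed.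

Lemma up_trans n m nu x : (n <= m)%N -> (m <= nu)%N ->
  up m nu (up n m x) = up n nu x.
Proof.
move=> hnm; elim: nu => [|nu IH] hm.
  by move: hm; rewrite leqn0 => /eqP ->; rewrite up_refl.
case: (ltngtP m nu.+1) hm => // [hlt|->] _; last by rewrite up_refl.
by rewrite up_S // IH // up_S //; apply: leq_trans hnm hlt.
Qed.

Definition up_ahom n nu (h : (n <= nu)%N) : 'AHom(L n, L nu) :=
  ecast i ('AHom(L n, L i)) (subnK h) (emb_ahom n (nu - n)).

Lemma castL_ahom n m m' (e : m = m') (F : 'AHom(L n, L m)) x :
  castL e (F x) = (ecast i ('AHom(L n, L i)) e F) x.
Proof. by case: m' / e. Qed.

Lemma up_ahomE n nu (h : (n <= nu)%N) x : up n nu x = up_ahom h x.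
Proof. by rewrite (up_cast (subnK h)) castL_ahom. Qed.

Lemma up_inj n nu (h : (n <= nu)%N) x y : up n nu x = up n nu y -> x = y.
Proof. by rewrite !(up_ahomE h); apply: fmorph_inj. Qed.

Lemma upD n nu (h : (n <= nu)%N) x y : up n nu (x + y) = up n nu x + up n nu y.
Proof. by rewrite !(up_ahomE h) rmorphD. Qed.

Lemma upM n nu (h : (n <= nu)%N) x y : up n nu (x * y) = up n nu x * up n nu y.
Proof. by rewrite !(up_ahomE h) rmorphM. Qed.

Lemma up_alg n nu (h : (n <= nu)%N) c : up n nu c%:A = c%:A.
Proof. by rewrite !(up_ahomE h) linearZ rmorph1. Qed.

End Inclusions.

Section NormalizedTrace.
Variables (k : fieldType) (Lx : splittingFieldType k).

Lemma sum_indicator_seq (T : eqType) (s : seq T) b0 (F : T -> Lx) :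
  uniq s -> b0 \in s -> \sum_(b <- s) (b0 == b)%:R * F b = F b0.
Proof.
move=> us sb0; rewrite (bigD1_seq b0) //= eqxx mul1r big1 ?addr0 //.
by move=> b; rewrite eq_sym => /negbTE ->; rewrite mul0r.
Qed.

Lemma mem_Gal_fixedField (E : {subfield Lx}) (u : gal_of {:Lx}) :
  (u \in galoisG {:Lx} E) = (E <= fixedField [set u])%VS.
Proof. by rewrite -sub1set galois_connection ?subvf. Qed.

(* The automorphisms sending x to rho x form the coset 'Gal(L / K(x)) rho. *)
Lemma card_gal_fiber (K : {subfield Lx}) x rho : rho \in galoisG {:Lx} K ->
  #|[set t in galoisG {:Lx} K | t x == rho x]| = #|galoisG {:Lx} <<K; x>>|.
Proof.
move=> Grho; rewrite -(card_rcoset (galoisG {:Lx} <<K; x>>) rho).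
apply: eq_card => t.
rewrite inE mem_rcoset (mem_Gal_fixedField <<K; x>>%AS); apply/andP/idP => [[Gt /eqP txr]|].
  apply/FadjoinP; split; first by rewrite -mem_Gal_fixedField groupM ?groupV.
  apply/fixedFieldP; rewrite ?memvf // => y; rewrite inE => /eqP ->.
  by rewrite galM ?memvf // txr -galM ?memvf // mulgV gal_id.
move/FadjoinP => [sKf xf].
have Gtr : (t * rho^-1)%g \in galoisG {:Lx} K by rewrite mem_Gal_fixedField.
split; first by rewrite -(mulgKV rho t) groupM.
have /(fixedFieldP (memvf x)) := xf => /(_ (t * rho^-1)%g).
rewrite inE eqxx => /(_ isT); rewrite galM ?memvf // => e.
by apply/eqP; rewrite -{2}e -(galM (rho^-1)%g rho (memvf (t x))) mulVg gal_id.
Qed.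

Lemma gal_sum_roots (K : {subfield Lx}) (x : Lx) (r : seq (gal_of {:Lx})) (F : Lx -> Lx) :
  r \subset galoisG {:Lx} K -> uniq [seq y x | y : gal_of {:Lx} <- r] ->
  minPoly K x = \prod_(b <- [seq y x | y : gal_of {:Lx} <- r]) ('X - b%:P) ->
  \sum_(t in galoisG {:Lx} K) F (t x) =
  #|galoisG {:Lx} <<K; x>>|%:R * \sum_(b <- [seq y x | y : gal_of {:Lx} <- r]) F b.
Proof.
move=> sr ur Dp; set G := galoisG _ K; set s := [seq _ | _ <- r].
have memG t : t \in G -> t x \in s.
  by move=> Gt; rewrite -root_prod_XsubC -Dp root_minPoly_gal ?subvf ?memvf.
transitivity (\sum_(t in G) \sum_(b <- s) (t x == b)%:R * F b).
  by apply: eq_bigr => t Gt; rewrite sum_indicator_seq // memG.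
rewrite exchange_big mulr_sumr /= !big_map; apply: eq_big_seq => rho rr.
rewrite -mulr_suml -(card_gal_fiber _ (subsetP sr _ rr)); congr (_ * _).
rewrite -sum1_card natr_sum big_mkcond [RHS]big_mkcond /=.
by apply: eq_bigr => t _; rewrite inE; case: (t \in G); case: (t x == rho x).
Qed.

(* The mean of the roots of the minimal polynomial of x over K.  Unlike
   galTrace it only depends on minPoly K x, hence commutes with every
   k-algebra morphism (ntrace_ahom). *)
Definition ntrace (K : {vspace Lx}) (x : Lx) : Lx :=
  - (minPoly K x)`_(adjoin_degree K x).-1 / (adjoin_degree K x)%:R.

Lemma galTrace_ntrace (K : {subfield Lx}) x : [pchar Lx] =i pred0 ->
  galois K {:Lx} -> galTrace K {:Lx} x = (\dim_K {:Lx})%:R * ntrace K x.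
Proof.
move=> hchar gK; have [r [sr ur Dp]] := galois_factors (subvf K) gK x (memvf x).
have sumx := gal_sum_roots id sr ur Dp.
have sum1 := gal_sum_roots (fun _ => 1) sr ur Dp.
have sum1_seq (t : seq Lx) : \sum_(b <- t) (1 : Lx) = (size t)%:R.
  by rewrite -sum1_size natr_sum.
rewrite sumr_const sum1_seq in sum1.
rewrite galois_dim // sum1 /galTrace sumx /ntrace.
set s := [seq _ | _ <- r] in sumx sum1 Dp *.
have ds : adjoin_degree K x = size s.
  by apply: succn_inj; rewrite -size_minPoly Dp size_prod_XsubC.
have s_neq0 : (size s)%:R != 0 :> Lx by rewrite ((pcharf0P _).1 hchar) -ds.
rewrite ds Dp coefPn_prod_XsubC; last by rewrite -ds.
by move: s_neq0; move: (size s)%:R => d d_neq0; field.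
Qed.

Lemma ntrace_in (K : {subfield Lx}) x : ntrace K x \in K.
Proof.
rewrite /ntrace rpredM ?rpredN ?rpredV ?rpred_nat //.
exact: (polyOverP (minPolyOver K x)).
Qed.

Lemma ntrace_id (K : {subfield Lx}) x : x \in K -> ntrace K x = x.
Proof.
move=> Kx; have := adjoin_deg_eq1 K x; rewrite Kx => /eqP; rewrite /ntrace => ->.
by rewrite (minPoly_XsubC Kx) coefB coefX coefC /= sub0r opprK divr1.
Qed.

End NormalizedTrace.

Lemma ntrace_ahom (k : fieldType) (L1 L2 : splittingFieldType k) (s : 'AHom(L1, L2))
    (K : {subfield L1}) x :
  s (ntrace K x) = ntrace (s @: K)%AS (s x).
Proof.
rewrite /ntrace -map_minPoly adjoin_degree_aimg coef_map fmorph_div rmorphN.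
by rewrite rmorph_nat.
Qed.

Section Trace.
Variables (k : fieldType) (L : nat -> splittingFieldType k).
Variable f : forall n, 'AHom(L n, L n.+1).
Hypothesis hchar : [pchar k] =i pred0.
Hypothesis hgal : forall n, galois 1 {:L n}.

Local Notation castL := (@castL L _ _).
Local Notation up n nu x := (@Defs.up k L f n nu x).
Local Notation down n nu x := (@Defs.down k L f n nu x).

Lemma natr_neq0 m : (0 < m)%N -> m%:R != 0 :> k.
Proof. by move=> m_gt0; rewrite ((pcharf0P _).1 hchar) -lt0n. Qed.

Lemma pchar_L n : [pchar L n] =i pred0.
Proof. by move=> p; rewrite pchar_lalg hchar. Qed.

Lemma Tr_ntrace n d x :
  Tr f x = (emb_ahom f n d)^-1%VF (ntrace (emb_ahom f n d @: fullv)%AS x).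
Proof.
rewrite /Tr emb_ahomE; set phi := emb_ahom f n d; set E := (phi @: fullv)%AS.
have gE : galois E fullv by apply: (galoisS _ (hgal _)); rewrite sub1v subvf.
rewrite galTrace_ntrace //; last exact: pchar_L.
have nZ (m : nat) (w : L (d + n)) : m%:R * w = (m%:R : k) *: w.
  by rewrite scaler_nat mulr_natl.
rewrite nZ linearZ scalerA.
have dE : \dim E = mdeg L n.
  by rewrite /E /= limg_dim_eq // (eqP (AHom_lker0 _)) capv0.
have dF : mdeg L (d + n) = (\dim_E {:L (d + n)} * mdeg L n)%N.
  by rewrite -dE /mdeg -dim_sup_field ?subvf.
have a_neq0 : (mdeg L n)%:R != 0 :> k by apply: natr_neq0; rewrite /mdeg adim_gt0.
have b_neq0 : (\dim_E {:L (d + n)})%:R != 0 :> k.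
  by apply: natr_neq0; rewrite divn_gt0 ?adim_gt0 //; apply: dimvS (subvf _).
rewrite dF natrM; move: a_neq0 b_neq0.
move: (mdeg L n)%:R (\dim_E _)%:R => a b a_neq0 b_neq0.
suff -> : a / (b * a) * b = 1 by rewrite scale1r.
by rewrite [b * a]mulrC mulrAC divff // mulf_neq0.
Qed.

Lemma ntrace_cast n m m' (e : m = m') (F : 'AHom(L n, L m)) (y : L m') :
  F^-1%VF (ntrace (F @: fullv)%AS (castL (esym e) y)) =
  (ecast i ('AHom(L n, L i)) e F)^-1%VF
     (ntrace ((ecast i ('AHom(L n, L i)) e F) @: fullv)%AS y).
Proof. by case: m' / e in y *. Qed.

Lemma down_ntrace n nu (h : (n <= nu)%N) x :
  down n nu x = (up_ahom f h)^-1%VF (ntrace (up_ahom f h @: fullv)%AS x).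
Proof.
rewrite /Defs.down; destruct (@idP (n <= nu)%N) as [h'|h']; last by [].
by rewrite Tr_ntrace ntrace_cast (bool_irrelevance h' h).
Qed.

Lemma up_ahomK n nu (h : (n <= nu)%N) x : (up_ahom f h)^-1%VF (up_ahom f h x) = x.
Proof. by rewrite lker0_lfunK ?AHom_lker0. Qed.

Lemma down_up n nu x : (n <= nu)%N -> down n nu (up n nu x) = x.
Proof.
move=> h; rewrite down_ntrace (up_ahomE f h) ntrace_id ?up_ahomK //.
by rewrite memv_img ?memvf.
Qed.

Lemma down_refl n x : down n n x = x.
Proof. by have := @down_up n n x (leqnn n); rewrite up_refl. Qed.

Lemma up_ahom_trans n m nu (h1 : (n <= m)%N) (h2 : (m <= nu)%N) (h3 : (n <= nu)%N) x :
  up_ahom f h2 (up_ahom f h1 x) = up_ahom f h3 x.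
Proof. by rewrite -!up_ahomE up_trans. Qed.

Lemma down_up_trans n N nu z : (n <= N)%N -> (N <= nu)%N ->
  down n nu (up N nu z) = down n N z.
Proof.
move=> h1 h2; have h3 := leq_trans h1 h2.
rewrite (down_ntrace h3) (down_ntrace h1) (up_ahomE f h2).
have Eimg : (up_ahom f h3 @: fullv)%VS = (up_ahom f h2 @: (up_ahom f h1 @: fullv))%VS.
  rewrite -limg_comp; congr (_ @: _)%VS; apply/lfunP => y.
  by rewrite comp_lfunE (up_ahom_trans h1 h2 h3).
have -> : ntrace (up_ahom f h3 @: fullv)%AS (up_ahom f h2 z) =
          ntrace (up_ahom f h2 @: (up_ahom f h1 @: fullv))%AS (up_ahom f h2 z).
  by rewrite /= Eimg.
rewrite -ntrace_ahom.
have /memv_imgP [u _ ->] := ntrace_in (up_ahom f h1 @: fullv)%AS z.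
by rewrite (up_ahom_trans h1 h2 h3) !up_ahomK.
Qed.

Lemma down_ahom n nu (h : (n <= nu)%N) (s : 'AHom(L nu, L nu)) (t : 'AHom(L n, L n)) :
  (forall x, s (up_ahom f h x) = up_ahom f h (t x)) ->
  forall x, down n nu (s x) = t (down n nu x).
Proof.
move=> st x; rewrite !(down_ntrace h).
have tfull : (t @: fullv)%VS = fullv by apply: lker0_limgf; apply: AHom_lker0.
have Eimg : (s @: (up_ahom f h @: fullv))%VS = (up_ahom f h @: fullv)%VS.
  rewrite -limg_comp -{2}tfull -limg_comp; congr (_ @: _)%VS; apply/lfunP => y.
  by rewrite !comp_lfunE st.
have -> : ntrace (up_ahom f h @: fullv)%AS (s x) =
          ntrace (s @: (up_ahom f h @: fullv))%AS (s x).
  by rewrite /= Eimg.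
rewrite -ntrace_ahom.
have /memv_imgP [u _ ->] := ntrace_in (up_ahom f h @: fullv)%AS x.
by rewrite st !up_ahomK.
Qed.

Lemma castLD m m' (e : m = m') (x y : L m) : castL e (x + y) = castL e x + castL e y.
Proof. by case: m' / e. Qed.

Lemma downD n nu x y : down n nu (x + y) = down n nu x + down n nu y.
Proof.
rewrite /Defs.down; destruct (@idP (n <= nu)%N) as [h|h]; last by rewrite addr0.
by rewrite castLD /Tr raddfD linearD scalerDr.
Qed.

Lemma downB n nu x y : down n nu (x - y) = down n nu x - down n nu y.
Proof. by apply/eqP; rewrite eq_sym subr_eq -downD subrK. Qed.

Lemma down0_1 n : down 0 n 1 = 1.
Proof.
have up1 : up 0 n 1 = 1 by have := up_alg f (leq0n n) 1; rewrite !scale1r.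
by rewrite -up1 down_up.
Qed.

End Trace.

Section Ultrametric.
Variables (R : realType) (k : fieldType) (v : k -> R).
Hypothesis vP : forall x, 0 <= v x /\ (v x = 0 <-> x = 0).
Hypothesis vM : forall x y, v (x * y) = v x * v y.
Hypothesis vU : forall x y, v (x + y) <= Num.max (v x) (v y).

Lemma v0 : v 0 = 0.
Proof. exact/(vP 0).2. Qed.

Lemma v_gt0 x : x != 0 -> 0 < v x.
Proof.
move=> x_neq0; rewrite lt_neqAle (vP x).1 andbT eq_sym.
by apply/eqP => /(vP x).2 x_eq0; move: x_neq0; rewrite x_eq0 eqxx.
Qed.

Lemma v1 : v 1 = 1.
Proof.
have v1_neq0 : v 1 != 0 by rewrite gt_eqF // v_gt0 ?oner_neq0.
by apply: (mulIf v1_neq0); rewrite -vM !mulr1 mul1r.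
Qed.

Lemma vN x : v (- x) = v x.
Proof.
have vN1 : v (-1) = 1.
  have : v (-1) ^+ 2 = 1 by rewrite expr2 -vM mulrNN mulr1 v1.
  move/eqP; rewrite sqrf_eq1 => /orP [/eqP //|/eqP vN1].
  by have := (vP (-1)).1; rewrite vN1 ler0N1.
by rewrite -mulN1r vM vN1 mul1r.
Qed.

Lemma vB x y : v (x - y) = v (y - x).
Proof. by rewrite -opprB vN. Qed.

Lemma kopen_ball c e : kopen v (fun w => v (w - c) < e).
Proof.
move=> x hx; exists e; split; first by apply: le_lt_trans hx; apply: (vP _).1.
move=> z hz; have := vU (z - x) (x - c); rewrite addrA subrK => h.
by apply: le_lt_trans h _; rewrite gt_max hz hx.
Qed.

Lemma ultra_balls_disjoint c1 c2 w :
  v (w - c1) < v (c1 - c2) -> v (w - c2) < v (c1 - c2) -> False.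
Proof.
move=> h1 h2; have := vU (c1 - w) (w - c2); rewrite addrA subrK => h.
have : v (c1 - c2) < v (c1 - c2) by apply: le_lt_trans h _; rewrite gt_max -vB h1 h2.
by rewrite ltxx.
Qed.

End Ultrametric.

Section KelTheory.
Variables (k : fieldType) (L : nat -> splittingFieldType k).
Variable f : forall n, 'AHom(L n, L n.+1).

Local Notation up n nu x := (@Defs.up k L f n nu x).
Local Notation Keq := (Kequiv f).
Local Notation lift a M := (up (tag a) M (tagged a)).

Lemma Kequiv_at (a b : Kel L) M : (tag a <= M)%N -> (tag b <= M)%N ->
  Keq a b <-> lift a M = lift b M.
Proof.
move=> ha hb; have hP : (maxn (tag a) (tag b) <= M)%N by rewrite geq_max ha hb.
rewrite /Kequiv -(up_trans f _ (leq_maxl _ _) hP) -(up_trans f _ (leq_maxr _ _) hP).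
by split=> [-> //|]; apply: up_inj.
Qed.

Lemma Kequiv_level n (x y : L n) : Keq (existT L n x) (existT L n y) <-> x = y.
Proof. by rewrite (Kequiv_at (M := n)) //= !up_refl. Qed.

Lemma Kequiv_up n nu (h : (n <= nu)%N) (x : L n) :
  Keq (existT L nu (up n nu x)) (existT L n x).
Proof. by apply/(Kequiv_at (M := nu)) => //=; rewrite up_refl. Qed.

Lemma Keq_sym a b : Keq a b -> Keq b a.
Proof. by move=> e; apply/(Kequiv_at (leq_maxr (tag a) (tag b)) (leq_maxl _ _)). Qed.

Lemma Keq_trans a b c : Keq a b -> Keq b c -> Keq a c.
Proof.
set M := maxn (maxn (tag a) (tag b)) (tag c).
have ha : (tag a <= M)%N by rewrite !leq_max leqnn.
have hb : (tag b <= M)%N by rewrite !leq_max leqnn orbT.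
have hc : (tag c <= M)%N by rewrite !leq_max leqnn orbT.
by move=> /(Kequiv_at ha hb) e1 /(Kequiv_at hb hc) e2; apply/(Kequiv_at ha hc); rewrite e1.
Qed.

Lemma lift_Kadd a b M : (tag a <= M)%N -> (tag b <= M)%N ->
  lift (Kadd f a b) M = lift a M + lift b M.
Proof.
move=> ha hb; have hP : (maxn (tag a) (tag b) <= M)%N by rewrite geq_max ha hb.
by rewrite /= (upD f hP) (up_trans f _ (leq_maxl _ _) hP) (up_trans f _ (leq_maxr _ _) hP).
Qed.

Lemma lift_Kmul a b M : (tag a <= M)%N -> (tag b <= M)%N ->
  lift (Kmul f a b) M = lift a M * lift b M.
Proof.
move=> ha hb; have hP : (maxn (tag a) (tag b) <= M)%N by rewrite geq_max ha hb.
by rewrite /= (upM f hP) (up_trans f _ (leq_maxl _ _) hP) (up_trans f _ (leq_maxr _ _) hP).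
Qed.

Lemma lift_Kscal c M : lift (Kscal L c) M = c%:A.
Proof. exact: up_alg. Qed.

Lemma Kequiv_level_add n (x y : L n) :
  Keq (existT L n (x + y)) (Kadd f (existT L n x) (existT L n y)).
Proof.
have hn : (maxn n n <= n)%N by rewrite maxnn.
by apply/(Kequiv_at (M := n)) => //; rewrite lift_Kadd // !up_refl.
Qed.

Lemma Kequiv_level_mul n (x y : L n) :
  Keq (existT L n (x * y)) (Kmul f (existT L n x) (existT L n y)).
Proof.
have hn : (maxn n n <= n)%N by rewrite maxnn.
by apply/(Kequiv_at (M := n)) => //; rewrite lift_Kmul // !up_refl.
Qed.

Lemma Kequiv_level_scal n c : Keq (existT L n c%:A) (Kscal L c).
Proof. by apply/(Kequiv_at (M := n)) => //; rewrite lift_Kscal up_refl. Qed.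

Section Congruence.
Variables a a' b b' : Kel L.
Let M := maxn (maxn (tag a) (tag a')) (maxn (tag b) (tag b')).
Let ha : (tag a <= M)%N. Proof. by rewrite !leq_max leqnn. Qed.
Let ha' : (tag a' <= M)%N. Proof. by rewrite !leq_max leqnn !orbT. Qed.
Let hb : (tag b <= M)%N. Proof. by rewrite !leq_max leqnn !orbT. Qed.
Let hb' : (tag b' <= M)%N. Proof. by rewrite !leq_max leqnn !orbT. Qed.

Lemma Kadd_congr : Keq a a' -> Keq b b' -> Keq (Kadd f a b) (Kadd f a' b').
Proof.
move=> /(Kequiv_at ha ha') e1 /(Kequiv_at hb hb') e2.
by apply/(Kequiv_at (M := M)); rewrite ?geq_max ?ha ?hb ?ha' ?hb' // !lift_Kadd // e1 e2.
Qed.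

Lemma Kmul_congr : Keq a a' -> Keq b b' -> Keq (Kmul f a b) (Kmul f a' b').
Proof.
move=> /(Kequiv_at ha ha') e1 /(Kequiv_at hb hb') e2.
by apply/(Kequiv_at (M := M)); rewrite ?geq_max ?ha ?hb ?ha' ?hb' // !lift_Kmul // e1 e2.
Qed.

End Congruence.

Fixpoint Khorner (cs : seq k) (a : Kel L) : Kel L :=
  if cs is c :: cs' then Kadd f (Kmul f (Khorner cs' a) a) (Kscal L c) else Kscal L 0.

Lemma tag_Khorner cs a : (tag (Khorner cs a) <= tag a)%N.
Proof. by elim: cs => [|c cs IH] //=; rewrite geq_max leq0n andbT geq_max IH leqnn. Qed.

Lemma lift_Khorner cs a M : (tag a <= M)%N ->
  lift (Khorner cs a) M = (map_poly (in_alg (L M)) (Poly cs)).[lift a M].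
Proof.
move=> ha; elim: cs => [|c cs IH]; first by rewrite /= lift_Kscal scale0r rmorph0 horner0.
have h1 : (tag (Khorner cs a) <= M)%N := leq_trans (tag_Khorner cs a) ha.
have h2 : (tag (Kmul f (Khorner cs a) a) <= M)%N by rewrite /= geq_max h1 ha.
rewrite [Khorner _ _]/= lift_Kadd // lift_Kmul // IH lift_Kscal.
rewrite (_ : Poly (c :: cs) = cons_poly c (Poly cs)) // cons_poly_def.
rewrite rmorphD rmorphM /= map_polyX map_polyC.
by rewrite hornerD hornerMX hornerC.
Qed.

End KelTheory.

Section KbarTheory.
Variables (k : fieldType) (L : nat -> splittingFieldType k).
Variable f : forall n, 'AHom(L n, L n.+1).
Hypothesis hchar : [pchar k] =i pred0.
Hypothesis hgal : forall n, galois 1 {:L n}.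

Local Notation up n nu x := (@Defs.up k L f n nu x).
Local Notation down n nu x := (@Defs.down k L f n nu x).
Local Notation Kb := (Kbar f).

Lemma Kbar_eq (y z : Kb) : (forall n, sval y n = sval z n) -> y = z.
Proof.
by case: y z => y hy [z hz] /= e; apply: eq_exist; apply: functional_extensionality_dep.
Qed.

Lemma iota_level N (x : L N) m :
  Defs.iota f (existT L N x) m = if (m <= N)%N then down m N x else up N m x.
Proof.
by rewrite /Defs.iota /=; case: leqP => h; rewrite ?up_refl ?down_refl.
Qed.

Lemma iota_sval_le (y : Kb) N m : (m <= N)%N ->
  Defs.iota f (existT L N (sval y N)) m = sval y m.
Proof. by move=> h; rewrite iota_level h -(svalP y). Qed.

Lemma Kbar_pred_iota_sval (y : Kb) N : Kbar_pred f (Defs.iota f (existT L N (sval y N))).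
Proof.
move=> n nu hnnu; rewrite !iota_level.
case: (leqP nu N) => hnuN.
  by rewrite (leq_trans hnnu hnuN) -!(svalP y) // (leq_trans hnnu hnuN).
case: (leqP n N) => hnN; first by rewrite down_up_trans // ltnW.
by rewrite -(up_trans f _ (ltnW hnN) hnnu) down_up.
Qed.

Definition trunc (y : Kb) N : Kb := exist _ _ (Kbar_pred_iota_sval y N).

Lemma pairing_trunc (y : Kb) N xi : (tag xi <= N)%N -> pairing xi (trunc y N) = pairing xi y.
Proof. by move=> h; rewrite /pairing /= iota_sval_le. Qed.

Lemma iota_at a n M : (tag a <= M)%N -> (n <= M)%N ->
  Defs.iota f a n = down n M (up (tag a) M (tagged a)).
Proof.
move=> ha hn; have hP : (maxn (tag a) n <= M)%N by rewrite geq_max ha hn.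
by rewrite /Defs.iota -(up_trans f _ (leq_maxl _ _) hP) [RHS]down_up_trans ?leq_maxr.
Qed.

Lemma iota_Kequiv a b n : Kequiv f a b -> Defs.iota f a n = Defs.iota f b n.
Proof.
set M := maxn (maxn (tag a) (tag b)) n.
have ha : (tag a <= M)%N by rewrite !leq_max leqnn.
have hb : (tag b <= M)%N by rewrite !leq_max leqnn !orbT.
have hn : (n <= M)%N by rewrite !leq_max leqnn !orbT.
by move/(Kequiv_at f ha hb) => e; rewrite (iota_at ha hn) (iota_at hb hn) e.
Qed.

Lemma scal0B (x y : L 0) : scal0 (x - y) = scal0 x - scal0 y.
Proof. by rewrite /scal0 linearB. Qed.

Lemma scal01 : scal0 (1 : L 0) = 1.
Proof.
have := @coord_free _ _ 1 [tuple (1 : L 0)] ord0 ord0.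
by rewrite seq1_free oner_neq0 eqxx => /(_ isT).
Qed.

Lemma pairing_separates (y z : Kb) : y <> z -> exists xi, pairing xi y <> pairing xi z.
Proof.
move=> y_neq_z; have [n yz_n] : exists n, sval y n <> sval z n.
  by apply/existsNP => yz; apply: y_neq_z; apply: Kbar_eq.
have d_neq0 : sval y n - sval z n != 0 by rewrite subr_eq0; apply/eqP.
exists (existT L n (sval y n - sval z n)^-1) => /eqP.
rewrite -subr_eq0 /pairing /= -scal0B -downB -mulrBr mulVf //.
by rewrite down0_1 // scal01 oner_eq0.
Qed.

Variables (R : realType) (v : k -> R).
Hypothesis vP : forall x, 0 <= v x /\ (v x = 0 <-> x = 0).
Hypothesis vM : forall x y, v (x * y) = v x * v y.
Hypothesis vU : forall x y, v (x + y) <= Num.max (v x) (v y).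

Lemma wopen_pairing_ball xi c e : wopen v (fun w : Kb => v (pairing xi w - c) < e).
Proof.
move=> w hw; exists 1%N, (fun _ => xi), (fun _ t => v (t - c) < e); split => //.
  by move=> _; apply: kopen_ball.
by move=> z /(_ ord0).
Qed.

Lemma wcont_trunc_near (Phi : Kb -> Kb) y xi e : wcont v Phi -> 0 < e ->
  exists N0, forall N, (N0 <= N)%N ->
    v (pairing xi (Phi (trunc y N)) - pairing xi (Phi y)) < e.
Proof.
move=> cPhi e_gt0.
have := cPhi _ (wopen_pairing_ball (xi := xi) (c := pairing xi (Phi y)) (e := e)) y.
rewrite /= subrr (v0 vP) => /(_ e_gt0) [m [xis [V [_ yV hV]]]].
exists (\max_(i < m) tag (xis i)) => N hN; apply: hV => i.
rewrite pairing_trunc; first exact: yV.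
exact: leq_trans (@leq_bigmax _ (fun i => tag (xis i)) i) hN.
Qed.

Lemma extends_unique g (Phi Psi : Kb -> Kb) :
  wcont v Phi -> wcont v Psi -> extends g Phi -> extends g Psi ->
  forall y, Phi y = Psi y.
Proof.
move=> cPhi cPsi ePhi ePsi y; apply: contrapT => Phi_neq_Psi.
have [xi xi_neq] := pairing_separates Phi_neq_Psi.
have e_gt0 : 0 < v (pairing xi (Phi y) - pairing xi (Psi y)).
  by apply: (v_gt0 vP); rewrite subr_eq0; apply/eqP.
have [N1 near1] := wcont_trunc_near y xi cPhi e_gt0.
have [N2 near2] := wcont_trunc_near y xi cPsi e_gt0.
have same : Phi (trunc y (maxn N1 N2)) = Psi (trunc y (maxn N1 N2)).
  by apply: Kbar_eq => n; rewrite (ePhi _ (trunc y _) erefl) (ePsi _ (trunc y _) erefl).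
apply: (ultra_balls_disjoint vP vM vU (near1 _ (leq_maxl N1 N2))).
by rewrite same; apply: near2 (leq_maxr N1 N2).
Qed.

End KbarTheory.


Definition linear_of (k : fieldType) (V W : vectType k) (h : V -> W) (hl : linear h) :
  {linear V -> W} := HB.pack h (GRing.isLinear.Build k V W *:%R h hl).

Section GalRestriction.
Variables (k : fieldType) (L : nat -> splittingFieldType k).
Variable f : forall n, 'AHom(L n, L n.+1).
Hypothesis hchar : [pchar k] =i pred0.
Hypothesis hgal : forall n, galois 1 {:L n}.
Hypothesis hd1 : \dim {:L 0} = 1%N.
Variable g : Kel L -> Kel L.
Hypothesis gG : is_Gal f g.

Local Notation up n nu x := (@Defs.up k L f n nu x).
Local Notation down n nu x := (@Defs.down k L f n nu x).
Local Notation Keq := (Kequiv f).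
Local Notation lift a M := (up (tag a) M (tagged a)).

Lemma g_congr a b : Keq a b -> Keq (g a) (g b).
Proof. by case: gG => congr _ _ _ _; apply: congr. Qed.

Lemma g_add a b : Keq (g (Kadd f a b)) (Kadd f (g a) (g b)).
Proof. by case: gG => _ add _ _ _; apply: add. Qed.

Lemma g_mul a b : Keq (g (Kmul f a b)) (Kmul f (g a) (g b)).
Proof. by case: gG => _ _ mul _ _; apply: mul. Qed.

Lemma g_scal c : Keq (g (Kscal L c)) (Kscal L c).
Proof. by case: gG => _ _ _ scal _; apply: scal. Qed.

Lemma g_Khorner cs a : Keq (g (Khorner f cs a)) (Khorner f cs (g a)).
Proof.
elim: cs => [|c cs IH] /=; first exact: g_scal.
apply: Keq_trans (g_add _ _) _; apply: Kadd_congr; last exact: g_scal.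
by apply: Keq_trans (g_mul _ _) _; apply: Kmul_congr.
Qed.

Lemma gal_root n (x : L n) (q : {poly k}) M : (tag (g (existT L n x)) <= M)%N ->
  (map_poly (in_alg (L n)) q).[x] = 0 ->
  (map_poly (in_alg (L M)) q).[lift (g (existT L n x)) M] = 0.
Proof.
move=> hM qx0; set a := existT L n x.
have qa0 : Keq (Khorner f q a) (Kscal L 0).
  apply/(Kequiv_at f (b := Kscal L 0) (tag_Khorner f q a) (leq0n n)).
  by rewrite lift_Khorner // lift_Kscal scale0r polyseqK up_refl.
have qga0 : Keq (Khorner f q (g a)) (Kscal L 0).
  apply: Keq_trans (Keq_sym (g_Khorner q a)) _.
  exact: Keq_trans (g_congr qa0) (g_scal 0).
move/(Kequiv_at f (b := Kscal L 0) (leq_trans (tag_Khorner f q (g a)) hM) (leq0n M)): qga0.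
by rewrite lift_Khorner // lift_Kscal scale0r polyseqK.
Qed.

Lemma gal_level_ex n (x : L n) : exists z : L n, Keq (g (existT L n x)) (existT L n z).
Proof.
have /polyOver1P [q Dq] := minPolyOver 1 x.
have qx0 : (map_poly (in_alg (L n)) q).[x] = 0 by rewrite -Dq minPolyxx.
set b := g (existT L n x); set M := maxn n (tag b).
have hn : (n <= M)%N := leq_maxl _ _.
have hb : (tag b <= M)%N := leq_maxr _ _.
have := gal_root hb qx0; rewrite -/b.
have -> : map_poly (in_alg (L M)) q = map_poly (up_ahom f hn) (minPoly 1 x).
  by rewrite Dq -map_poly_comp; apply: eq_map_poly => c /=; rewrite linearZ /= rmorph1.
have [r [_ _ ->]] := galois_factors (subvf 1%AS) (hgal n) x (memvf x).
rewrite map_prod_XsubC -(big_map (up_ahom f hn) xpredT (fun u => 'X - u%:P)).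
move/rootP; rewrite root_prod_XsubC => /mapP [u _ Du].
by exists u; apply/(Kequiv_at f (b := existT L n u) hb hn); rewrite Du -up_ahomE.
Qed.

Definition galn n (x : L n) : L n := sval (cid (gal_level_ex x)).

Lemma galn_spec n (x : L n) : Keq (g (existT L n x)) (existT L n (galn x)).
Proof. exact: svalP (cid (gal_level_ex x)). Qed.

Lemma galnD n (x y : L n) : galn (x + y) = galn x + galn y.
Proof.
apply/(Kequiv_level f); apply: Keq_trans (Keq_sym (galn_spec _)) _.
apply: Keq_trans (g_congr (Kequiv_level_add f x y)) _.
apply: Keq_trans (g_add _ _) _.
apply: Keq_trans (Kadd_congr (galn_spec x) (galn_spec y)) _.
exact: Keq_sym (Kequiv_level_add _ _ _).
Qed.

Lemma galnM n (x y : L n) : galn (x * y) = galn x * galn y.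
Proof.
apply/(Kequiv_level f); apply: Keq_trans (Keq_sym (galn_spec _)) _.
apply: Keq_trans (g_congr (Kequiv_level_mul f x y)) _.
apply: Keq_trans (g_mul _ _) _.
apply: Keq_trans (Kmul_congr (galn_spec x) (galn_spec y)) _.
exact: Keq_sym (Kequiv_level_mul _ _ _).
Qed.

Lemma galn_alg n c : galn (c%:A : L n) = c%:A.
Proof.
apply/(Kequiv_level f); apply: Keq_trans (Keq_sym (galn_spec _)) _.
apply: Keq_trans (g_congr (Kequiv_level_scal f n c)) _.
exact: Keq_trans (g_scal _) (Keq_sym (Kequiv_level_scal _ _ _)).
Qed.

Lemma galn_up n nu (h : (n <= nu)%N) (x : L n) : up n nu (galn x) = galn (up n nu x).
Proof.
apply/(Kequiv_level f); apply: Keq_trans (Kequiv_up f h _) _.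
apply: Keq_trans (Keq_sym (galn_spec x)) _.
exact: Keq_trans (g_congr (Keq_sym (Kequiv_up f h x))) (galn_spec _).
Qed.

Lemma galn_is_linear n : linear (@galn n).
Proof. by move=> c x y; rewrite galnD -mulr_algl galnM galn_alg mulr_algl. Qed.

Definition galn_linear n : {linear L n -> L n} := linear_of (@galn_is_linear n).

Lemma galn_ahom_in n : ahom_in {:L n} (linfun (galn_linear n)).
Proof.
apply/ahom_inP; split => [x y _ _|]; rewrite !lfunE /=; first exact: galnM.
by have := galn_alg n 1; rewrite scale1r.
Qed.

Definition galn_ahom n : 'AHom(L n, L n) := AHom (galn_ahom_in n).

Lemma galn_ahomE n x : galn_ahom n x = galn x.
Proof. exact: (lfunE (galn_linear n)). Qed.

Lemma galn_ahomVK n (u : L n) : galn ((galn_ahom n)^-1%VF u) = u.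
Proof.
by rewrite -galn_ahomE limg_lfunVK // lker0_limgf ?AHom_lker0 ?memvf.
Qed.

Lemma galn_down n nu (h : (n <= nu)%N) (w : L nu) : galn (down n nu w) = down n nu (galn w).
Proof.
rewrite -!galn_ahomE (@down_ahom k L f hchar hgal n nu h (galn_ahom nu) (galn_ahom n)) // => x.
by rewrite !galn_ahomE -!up_ahomE galn_up.
Qed.

Lemma galn_level0 (x : L 0) : galn x = x.
Proof.
have full1 : (1%VS : {vspace L 0}) = fullv by apply/eqP; rewrite eqEdim subvf hd1 dimv1.
have : x \in (1%VS : {vspace L 0}) by rewrite full1 memvf.
by case/vlineP => c ->; rewrite galn_alg.
Qed.

Lemma galKbar_pred (y : Kbar f) : Kbar_pred f (fun n => galn (sval y n)).
Proof. by move=> n nu h; rewrite -galn_down //; congr galn; apply: (svalP y). Qed.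

Definition galKbar (y : Kbar f) : Kbar f := exist _ _ (galKbar_pred y).

Lemma galKbar_extends : extends g galKbar.
Proof.
move=> [N x] y ey; apply: functional_extensionality_dep => n.
rewrite /= ey /Defs.iota /= galn_down ?leq_maxr // -galn_up ?leq_maxl //.
by have := iota_Kequiv hchar hgal n (Keq_sym (galn_spec x)); rewrite /Defs.iota.
Qed.

Lemma pairing_galKbar n (u : L n) z :
  pairing (existT L n (galn u)) (galKbar z) = pairing (existT L n u) z.
Proof. by rewrite /pairing /= -galnM -galn_down // galn_level0. Qed.

Lemma pairing_galKbarV xi z : pairing xi (galKbar z) =
  pairing (existT L (tag xi) ((galn_ahom (tag xi))^-1%VF (tagged xi))) z.
Proof. by case: xi => n u; rewrite -{1}(galn_ahomVK u) pairing_galKbar. Qed.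

Lemma galKbar_wcont (R : realType) (v : k -> R) : wcont v galKbar.
Proof.
move=> U wU y Uy; have [m [xi [V [oV Vy hV]]]] := wU (galKbar y) Uy.
exists m, (fun i => existT L (tag (xi i)) ((galn_ahom _)^-1%VF (tagged (xi i)))), V.
split=> [//|i|z Vz]; first by rewrite -pairing_galKbarV.
by apply: hV => i; rewrite pairing_galKbarV.
Qed.

End GalRestriction.

Section Extension.
Variables (R : realType) (k : fieldType) (v : k -> R).
Variables (L : nat -> splittingFieldType k) (f : forall n, 'AHom(L n, L n.+1)).

Definition gal_ext (g : Kel L -> Kel L) : Kbar f -> Kbar f :=
  if pselect (exists Phi : Kbar f -> Kbar f, wcont v Phi /\ extends g Phi) is left ex
  then sval (cid ex)
  else id.

Lemma gal_extP g (Phi : Kbar f -> Kbar f) : wcont v Phi -> extends g Phi ->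
  wcont v (gal_ext g) /\ extends g (gal_ext g).
Proof.
rewrite /gal_ext; case: pselect => [ex|nex] cPhi ePhi; first exact: svalP (cid ex).
by case: nex; exists Phi.
Qed.

Hypothesis vP : forall x, 0 <= v x /\ (v x = 0 <-> x = 0).
Hypothesis vM : forall x y, v (x * y) = v x * v y.
Hypothesis vU : forall x y, v (x + y) <= Num.max (v x) (v y).
Hypothesis hchar : [pchar k] =i pred0.
Hypothesis hgal : forall n, galois 1 {:L n}.
Hypothesis hd1 : \dim {:L 0} = 1%N.

Lemma gal_ext_unique g (Phi : Kbar f -> Kbar f) :
  wcont v Phi -> extends g Phi -> forall y, Phi y = gal_ext g y.
Proof.
move=> cPhi ePhi; have [c e] := gal_extP cPhi ePhi.
exact: (extends_unique hchar hgal vP vM vU cPhi c ePhi e).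
Qed.

Lemma gal_ext_spec g : is_Gal f g -> wcont v (gal_ext g) /\ extends g (gal_ext g).
Proof.
move=> gG; apply: (gal_extP _ (galKbar_extends hchar hgal gG)).
exact: (galKbar_wcont (hchar := hchar) (hgal := hgal) hd1 (gG := gG) (v := v)).
Qed.

End Extension.

Theorem proposition2 (R : realType) (k : fieldType) (v : k -> R)
    (L : nat -> splittingFieldType k) (f : forall n, 'AHom(L n, L n.+1)) :
  nonarch_local_field_char0 v ->
  \dim {:L 0} = 1%N ->
  (forall n, galois 1%VS {:L n}) ->
  exists ext : (Kel L -> Kel L) -> Kbar f -> Kbar f,
    [/\ forall g, is_Gal f g ->
          [/\ wcont v (ext g), extends g (ext g)
            & forall Phi, wcont v Phi -> extends g Phi -> forall y, Phi y = ext g y],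
        forall g h, is_Gal f g -> is_Gal f h ->
          forall y, ext (fun a => g (h a)) y = ext g (ext h y)
      & forall y, ext id y = y].
Proof.
move=> [vP vM vU _ [_ _ hchar]] hd1 hgal.
have unique := @gal_ext_unique R k v L f vP vM vU hchar hgal.
have spec := @gal_ext_spec R k v L f hchar hgal hd1.
exists (@gal_ext R k v L f); split=> [g gG | g h gG hG y | y].
- by have [cg eg] := spec g gG; split=> // Phi; apply: unique.
- have [cg eg] := spec g gG; have [ch eh] := spec h hG.
  by rewrite -(unique _ (fun z => gal_ext v g (gal_ext v h z))) // => [U /cg /ch | a z /eh /eg].
- by rewrite -(unique _ id).
Qed.
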